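(* Let $T$ be a non-star tree containing an edge $xy$ with $d_T(x)=1$ and $d_T(y)\ge 3$. Suppose that for every neighbor $y'\ne x$ of $y$, the tree $T_{(y',y)}$ is a neighbor $F$-tree of $y$ which is not a single vertex (i.e. not isomorphic to $P_1$). Then there exists a $(T,x)$-good 2-placement.
   Context: All graphs are finite, simple and undirected; $P_k$ is the path on $k$ vertices. A non-star tree is a tree not isomorphic to a star $K_{1,m}$ for any $m\ge0$. For an edge $ab$ of a tree $T$, $T_{(a,b)}$ denotes the connected component containing $a$ in $T-\{ab\}$; it is a neighbor $F$-tree of $b$ if it is a path with at most $3$ vertices and, when it has exactly $3$ vertices, $a$ is an end vertex of it. A permutation $\sigma$ of $V(T)$ is a 2-placement of $T$ if $\sigma(a)\sigma(b)\notin E(T)$ for every edge $ab\in E(T)$; $\sigma(T)\subseteq T^k$ means $dist_T(\sigma(a),\sigma(b))\le k$ for every edge $ab$ of $T$. A fixed-point-free permutation $\sigma$ of $V(T)$ is a $(T,x)$-good 2-placement if (distances and degrees in $T$): (1) $\sigma$ is a 2-placement of $T$; (2) $\sigma(T)\subseteq T^5$; (3) $dist(x,\sigma(x))=1$; (4) $dist(w,\sigma(w))\le 2$ for every neighbor $w$ of $x$; (5) $dist(w,\sigma(w))\le 4$ for every $w$ of degree $1$. *)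

From mathcomp Require Import all_boot perm.
Set Implicit Arguments. Unset Strict Implicit. Unset Printing Implicit Defensive.

Section Graphs.
Variables (T : finType) (e : rel T).

Definition simple_graph : Prop := symmetric e /\ irreflexive e.

Definition is_tree : Prop :=
  simple_graph /\ (forall u v : T, connect e u v) /\
  ~ (exists s : seq T, [&& uniq s, 3 <= size s & cycle e s]).

Definition deg (v : T) : nat := #|[set w | e v w]|.

Fixpoint walkn (k : nat) (u v : T) : bool :=
  if k is k'.+1 then [exists z, e u z && walkn k' z v] else u == v.

(* graph distance: least k with a walk of length k (#|T| if unreachable) *)
Definition dist (u v : T) : nat := find (fun k => walkn k u v) (iota 0 #|T|).

Definition star_rel (m : nat) : rel 'I_m.+1 :=
  fun i j => (i != j) && ((val i == 0) || (val j == 0)).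

Definition is_star : Prop :=
  exists m, exists f : T -> 'I_m.+1,
    bijective f /\ forall u v, e u v = star_rel (f u) (f v).

Definition rem_edge (a b : T) : rel T :=
  fun u v => e u v && ~~ (((u == a) && (v == b)) || ((u == b) && (v == a))).

(* vertex set of T_(a,b): the component of a in T - {ab} *)
Definition Tcomp (a b : T) : {set T} := [set v | connect (rem_edge a b) a v].

Definition induced_path_seq (S : {set T}) (s : seq T) : Prop :=
  [/\ uniq s, S = [set z in s],
      (if s is z :: s' then path e z s' else False) &
      forall u v, u \in S -> v \in S -> e u v ->
        exists i, i.+1 < size s /\
          ((nth u s i == u) && (nth u s i.+1 == v) ||
           (nth u s i == v) && (nth u s i.+1 == u))].

Definition neighbor_F_tree (a b : T) : Prop :=
  exists s, induced_path_seq (Tcomp a b) s /\ #|Tcomp a b| <= 3 /\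
    (#|Tcomp a b| = 3 -> (head a s = a \/ last a s = a)).

Definition two_placement (sigma : {perm T}) : Prop :=
  forall a b, e a b -> ~~ e (sigma a) (sigma b).

Definition good_2placement (x : T) (sigma : {perm T}) : Prop :=
  (forall v, sigma v != v) /\
  [/\ two_placement sigma,
      (forall a b, e a b -> dist (sigma a) (sigma b) <= 5),
      dist x (sigma x) = 1,
      (forall w, e x w -> dist w (sigma w) <= 2) &
      (forall w, deg w = 1 -> dist w (sigma w) <= 4)].

End Graphs.

From mathcomp Require Import all_boot perm.
Set Implicit Arguments. Unset Strict Implicit. Unset Printing Implicit Defensive.

(* The hypotheses force T to be a spider centred at y: the leg {x}, and k >= 2
   legs a - b or a - b - c attached to y by their end a.  Ordering the roots
   a_0, ..., a_(k-1) cyclically, the placement sends x to y, y to b_0, each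
   root a_i to b_(i+1) (and a_(k-1) to x), and reverses every leg:
   b -> c -> a on long legs, b -> a on short ones.  Each condition is then
   verified by exhibiting short explicit walks.

   The
   hypothesis that T is not a star is implied by the others and not needed. *)

Section Walks.
Variables (T : finType) (e : rel T).

Lemma walkn_path u p : path e u p -> walkn e (size p) u (last u p).
Proof.
elim: p u => [|z p IH] u /=; first by rewrite eqxx.
by case/andP=> euz pz; apply/existsP; exists z; rewrite euz IH.
Qed.

Lemma dist_le_path u v p :
  path e u p -> last u p = v -> size p < #|T| -> dist e u v <= size p.
Proof.
move=> up lastp small; have walk := walkn_path up; rewrite lastp in walk.
rewrite /dist leqNgt; apply/negP => /(before_find 0).
by rewrite nth_iota // add0n walk.
Qed.

Lemma dist_gt0 u v : u != v -> 0 < dist e u v.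
Proof.
move=> neq_uv; rewrite /dist; have : 0 < #|T| by apply/card_gt0P; exists u.
by case: #|T| => // n _ /=; rewrite (negbTE neq_uv).
Qed.

Lemma path_rem_edge a b u p :
  path e u p -> b \notin u :: p -> path (rem_edge e a b) u p.
Proof.
elim: p u => [|z p IH] u //= /andP[euz pz].
rewrite !inE !negb_or => /andP[bu /andP[bz bp]].
rewrite IH ?inE ?negb_or ?bz ?bp // andbT /rem_edge euz /=.
by rewrite (eq_sym z b) (negbTE bz) (eq_sym u b) (negbTE bu) !andbF.
Qed.

Lemma rem_edge_sym a b : symmetric e -> symmetric (rem_edge e a b).
Proof.
move=> sym_e u v; rewrite /rem_edge sym_e.
by rewrite [X in _ || X]andbC [X in X || _]andbC orbC.
Qed.

End Walks.

Lemma next_neq (U : eqType) (s : seq U) a :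
  uniq s -> 2 <= size s -> a \in s -> next s a != a.
Proof.
rewrite next_nth; case: s => [|z q] //= /andP[zq uq] size_s a_s; rewrite a_s.
case: (eqVneq z a) => [<-|za].
  case: q zq uq size_s {a_s} => [|w q] //= zq _ _.
  by apply: contraNneq zq => ->; rewrite inE eqxx.
have aq : a \in q by move: a_s; rewrite inE eq_sym (negbTE za).
case: (ltnP (index a q).+1 (size q)) => [lt|ge]; last by rewrite (nth_default z ge).
apply/eqP => E; have := nth_uniq z (ltnW lt) lt uq.
by rewrite E nth_index // eqxx eqn_leq ltnn andbF.
Qed.

Section TreeComponents.
Variables (T : finType) (e : rel T).
Hypothesis tree : is_tree e.

Lemma tree_sym : symmetric e. Proof. by case: tree => [[]]. Qed.
Lemma tree_irr : irreflexive e. Proof. by case: tree => [[]]. Qed.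

Lemma Tcomp_self a b : a \in Tcomp e a b.
Proof. by rewrite inE connect0. Qed.

(* Removing the edge ba disconnects b from a: otherwise a shortest path
   from a to b in T - ab, closed by the edge ba, would be a cycle. *)
Lemma Tcomp_notin a b : e b a -> b \notin Tcomp e a b.
Proof.
move=> eba; apply/negP; rewrite inE => /connectP[p pp lp].
move: lp; case/shortenP: pp => q pq uq _ lq.
case: tree => _ [_ acyclic]; apply: acyclic; exists (a :: q).
case: q pq uq lq => [|z [|w q]] pq uq lq; rewrite /= in lq.
- by rewrite lq tree_irr in eba.
- by move: pq; rewrite /= -lq /rem_edge !eqxx /= andbF.
rewrite uq /cycle rcons_path /= -lq eba !andbT.
by apply: sub_path pq => u v /andP[].
Qed.

Lemma Tcomp_neq a b v : e b a -> v \in Tcomp e a b -> v != b.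
Proof. by move=> eba; apply: contraTneq => ->; apply: Tcomp_notin. Qed.

Lemma Tcomp_closed a b u w :
  e b a -> u \in Tcomp e a b -> e u w -> (u != a) || (w != b) -> w \in Tcomp e a b.
Proof.
move=> eba uS euw not_ab; have ub := Tcomp_neq eba uS.
move: uS; rewrite !inE => uS; apply: (connect_trans uS (connect1 _)).
rewrite /rem_edge euw /= (negbTE ub) /= orbF.
by case/orP: not_ab => /negbTE ->; rewrite ?andbF.
Qed.

Lemma Tcomp_nbr a b v : e b a -> v \in Tcomp e a b -> e b v -> v = a.
Proof.
move=> eba vS ebv; apply/eqP; apply: contraTT (Tcomp_notin eba) => va.
by rewrite negbK; apply: (Tcomp_closed eba vS); rewrite 1?tree_sym ?va.
Qed.

(* Distinct neighbours a, a' of y have disjoint branches: a path from a' to a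
   common vertex v inside T_(a',y) avoids y, so it survives in T - ay, and the
   edge a'y would then put y in T_(a,y). *)
Lemma Tcomp_disjoint y a a' v :
  e y a -> e y a' -> v \in Tcomp e a y -> v \in Tcomp e a' y -> a = a'.
Proof.
move=> eya eya' vS vS'; apply/eqP; apply: contraTT (Tcomp_notin eya) => neq_aa'.
have /connectP[p pp lp] : connect (rem_edge e a' y) a' v by rewrite inE in vS'.
have a'v : connect (rem_edge e a y) a' v.
  apply/connectP; exists p => //; apply: path_rem_edge.
    by apply: sub_path pp => u w /andP[].
  apply/negP => /(path_connect pp) a'y.
  by move: (Tcomp_notin eya'); rewrite inE a'y.
have aa' : connect (rem_edge e a y) a a'.
  rewrite inE in vS; apply: (connect_trans vS).
  by rewrite (sym_connect_sym (rem_edge_sym a y tree_sym)).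
rewrite negbK inE; apply: (connect_trans aa' (connect1 _)).
rewrite /rem_edge tree_sym eya' /= eqxx andbT.
by rewrite eq_sym (negbTE neq_aa') (negbTE (Tcomp_neq eya' (Tcomp_self a' y))).
Qed.

Lemma Tcomp_edge y a a' u w :
  e y a -> e y a' -> u \in Tcomp e a y -> w \in Tcomp e a' y -> e u w -> a = a'.
Proof.
move=> eya eya' uS wS' euw; apply: (Tcomp_disjoint eya eya' _ wS').
by apply: (Tcomp_closed eya uS euw); rewrite (Tcomp_neq eya' wS') orbT.
Qed.

(* Every vertex other than y lies in the branch of some neighbour of y:
   take the first step of a shortest path from y. *)
Lemma Tcomp_cover y v : v != y -> exists2 a, e y a & v \in Tcomp e a y.
Proof.
move=> vy; case: tree => _ [conn _]; case/connectP: (conn y v) => p pp lp.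
move: lp; case/shortenP: pp => [[|w q]] pq uq _ lq; first by rewrite lq eqxx in vy.
case/andP: pq => eyw pq; exists w => //; rewrite inE; apply/connectP; exists q => //.
by apply: path_rem_edge => //; case/andP: uq.
Qed.

Lemma Tcomp_leaf a b v : (forall w, e a w -> w = b) -> v \in Tcomp e a b -> v = a.
Proof.
move=> leaf; rewrite inE => /connectP[[|z p] //= /andP[az _] _].
by move: az; rewrite /rem_edge => /andP[/leaf ->]; rewrite !eqxx.
Qed.

End TreeComponents.

Section InducedPaths.
Variables (T : finType) (e : rel T).

Lemma induced_path_card S s : induced_path_seq e S s -> #|S| = size s.
Proof. by case=> uniq_s -> _ _; rewrite cardsE; apply/card_uniqP. Qed.

Lemma induced_path2 S p q :
  induced_path_seq e S [:: p; q] -> [/\ S = [set p; q], e p q & p != q].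
Proof.
case=> /= uniq_pq -> /andP[epq _] _; rewrite inE andbT in uniq_pq.
by split=> //; apply/setP => z; rewrite !inE.
Qed.

Lemma induced_path3 S p q r :
  induced_path_seq e S [:: p; q; r] ->
  [/\ S = [set p; q; r], e p q, e q r, ~~ e p r & uniq [:: p; q; r]].
Proof.
case=> uniq_pqr -> /= /and3P[epq eqr _] chords.
have pS : p \in [set z in [:: p; q; r]] by rewrite inE mem_head.
have rS : r \in [set z in [:: p; q; r]] by rewrite !inE eqxx !orbT.
split=> //; first by apply/setP => z; rewrite !inE orbA.
apply/negP => /(chords p r pS rS).
move: uniq_pqr; rewrite /= !inE !negb_or andbT => /andP[/andP[pq pr] qr].
case=> [[|[|i]]] [//= _]; rewrite eqxx ?(eq_sym r q) ?(eq_sym r p) ?(eq_sym q p).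
- by rewrite (negbTE pr) (negbTE qr).
- by rewrite (negbTE pq) (negbTE qr).
Qed.

End InducedPaths.

Lemma pick_eq (U : finType) (P : pred U) d b :
  P b -> (forall z, P z -> z = b) -> odflt d [pick z | P z] = b.
Proof. by move=> Pb uniqP; case: pickP => [z /uniqP | /(_ b)] //=; rewrite Pb. Qed.

Section Spider.
Variables (T : finType) (e : rel T) (x y : T).
Hypothesis tree : is_tree e.
Hypothesis exy : e x y.
Hypothesis deg_x : deg e x = 1.
Hypothesis deg_y : 3 <= deg e y.
Hypothesis short_legs : forall y', e y y' -> y' != x ->
  neighbor_F_tree e y' y /\ #|Tcomp e y' y| != 1.

Let e_sym : symmetric e := tree_sym tree.
Let e_irr : irreflexive e := tree_irr tree.

Lemma x_nbr w : e x w -> w = y.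
Proof.
move=> exw; move: deg_x; rewrite /deg => /eqP/cards1P[z Nx].
have : w \in [set z] by rewrite -Nx inE.
have : y \in [set z] by rewrite -Nx inE.
by rewrite !inE => /eqP -> /eqP ->.
Qed.

Lemma x_nbrE w : e x w = (w == y).
Proof. by apply/idP/eqP => [/x_nbr | ->]. Qed.
Lemma x_neq_y : x != y. Proof. by apply: contraTneq exy => ->; rewrite e_irr. Qed.

Definition legs : {set T} := [set a | e y a & a != x].
Definition leg (a : T) : {set T} := Tcomp e a y.
Definition long (a : T) : bool := #|leg a| == 3.

Lemma legs_y a : a \in legs -> e y a. Proof. by rewrite inE => /andP[]. Qed.
Lemma legs_x a : a \in legs -> a != x. Proof. by rewrite inE => /andP[]. Qed.

Lemma leg_shape a : a \in legs -> exists b, e a b /\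
  ((~~ long a /\ leg a = [set a; b]) \/
   (exists c, [/\ long a, leg a = [set a; b; c], e b c, ~~ e a c & uniq [:: a; b; c]])).
Proof.
move=> a_legs; case: (short_legs (legs_y a_legs) (legs_x a_legs)).
rewrite /leg /long => -[s [ips [card_le3 endpoint]]] card_neq1.
have card_s := induced_path_card ips; rewrite card_s in card_le3 card_neq1 endpoint *.
have a_s : a \in s by case: ips => _ leg_s _ _; move: (Tcomp_self e a y); rewrite leg_s inE.
case: s ips card_s a_s card_le3 card_neq1 endpoint => [|p [|q [|r [|t s]]]] //
  ips _ a_s _ _ endpoint.
- case/induced_path2: ips => -> epq pq; move: a_s; rewrite !inE => /orP[] /eqP ?; subst.
  + by exists q; split=> //; left.
  + by exists p; split; rewrite 1?e_sym //; left; split=> //; rewrite setUC.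
- case/induced_path3: ips => -> epq eqr nepr uniq_pqr.
  case: (endpoint erefl) => /= ?; subst.
  + by exists q; split=> //; right; exists r.
  + exists q; split; rewrite 1?e_sym //; right; exists p; split; rewrite 1?e_sym //.
    * by apply/setP => z; rewrite !inE; case: (z == p); case: (z == q); case: (z == a).
    * move: uniq_pqr; rewrite /= !inE !negb_or !andbT !(eq_sym a) (eq_sym q p).
      by case/andP=> /andP[-> ->] ->.
Qed.

(* The second and third vertices of the leg of a (meaningful for a in legs). *)
Definition second (a : T) : T := odflt a [pick z in leg a | e a z].
Definition third (a : T) : T := odflt a [pick z in leg a | (z != a) && (z != second a)].

Lemma leg_spec a : a \in legs -> e a (second a) /\
  ((~~ long a /\ leg a = [set a; second a]) \/
   [/\ long a, leg a = [set a; second a; third a], e (second a) (third a),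
       ~~ e a (third a) & uniq [:: a; second a; third a]]).
Proof.
move=> a_legs; have [b [eab shape]] := leg_shape a_legs.
have second_b : second a = b.
  apply: pick_eq => [|z /andP[]]; first by rewrite eab andbT;
    case: shape => [[_ ->]|[c [_ -> _ _ _]]]; rewrite !inE eqxx ?orbT.
  case: shape => [[_ ->]|[c [_ -> _ nac _]]]; rewrite !inE -?orbA.
    by case/orP=> /eqP -> //; rewrite e_irr.
  by case/or3P=> /eqP -> // => [|eac]; [rewrite e_irr | rewrite eac in nac].
rewrite second_b; split=> //.
case: shape => [short | [c [long_a leg_a ebc nac uniq_abc]]]; [by left | right].
have -> : third a = c.
  move: uniq_abc; rewrite /= !inE !negb_or andbT => /andP[/andP[ab ac] bc].
  rewrite /third second_b; apply: pick_eq => [|z].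
    by rewrite leg_a !inE eqxx !orbT (eq_sym c a) (eq_sym c b) ac bc.
  by rewrite leg_a !inE -!orbA => /andP[/or3P[] /eqP -> //]; rewrite eqxx ?andbF.
by split.
Qed.

Lemma second_edge a : a \in legs -> e a (second a).
Proof. by case/leg_spec. Qed.

Lemma short_leg a : a \in legs -> ~~ long a -> leg a = [set a; second a].
Proof. by case/leg_spec=> _ [[] | [->]]. Qed.

Lemma long_leg a : a \in legs -> long a ->
  [/\ leg a = [set a; second a; third a], e (second a) (third a),
      ~~ e a (third a) & uniq [:: a; second a; third a]].
Proof. by case/leg_spec=> _ [[/negbTE ->] | []]. Qed.

Lemma third_edge a : a \in legs -> long a -> e (second a) (third a).
Proof. by move=> a_legs /(long_leg a_legs)[]. Qed.

Lemma third_chord a : a \in legs -> long a -> ~~ e a (third a).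
Proof. by move=> a_legs /(long_leg a_legs)[]. Qed.

Lemma second_neq a : a \in legs -> second a != a.
Proof. by move/second_edge; apply: contraTneq => ->; rewrite e_irr. Qed.

Lemma third_neq a : a \in legs -> long a -> (third a != a) && (third a != second a).
Proof.
move=> a_legs /(long_leg a_legs)[_ _ _].
rewrite /= !inE !negb_or andbT => /andP[/andP[_ neq_ac] neq_bc].
by rewrite eq_sym neq_ac eq_sym neq_bc.
Qed.

Lemma second_in a : a \in legs -> second a \in leg a.
Proof.
move=> a_legs; case: (boolP (long a)) => [/(long_leg a_legs)[-> _ _ _] | /(short_leg a_legs) ->];
  by rewrite !inE eqxx ?orbT.
Qed.

Lemma third_in a : a \in legs -> long a -> third a \in leg a.
Proof. by move=> a_legs /(long_leg a_legs)[-> _ _ _]; rewrite !inE eqxx !orbT. Qed.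

Lemma leg_mem a v : a \in legs -> v \in leg a ->
  [\/ v = a, v = second a | long a /\ v = third a].
Proof.
move=> a_legs; case: (boolP (long a)) => [long_a | /(short_leg a_legs) ->].
  case: (long_leg a_legs long_a) => -> _ _ _; rewrite !inE -orbA.
  by case/or3P => /eqP ->; [apply: Or31 | apply: Or32 | apply: Or33].
by rewrite !inE; case/orP => /eqP ->; [apply: Or31 | apply: Or32].
Qed.

Lemma leg_neq_y a v : a \in legs -> v \in leg a -> v != y.
Proof. by move/legs_y; apply: Tcomp_neq. Qed.

(* The leaf x lies on no other leg, as branches at y are disjoint. *)
Lemma leg_neq_x a v : a \in legs -> v \in leg a -> v != x.
Proof.
move=> a_legs; apply: contraTneq => ->; apply/negP => x_leg.
have := Tcomp_disjoint tree (legs_y a_legs) (etrans (e_sym y x) exy) x_leg (Tcomp_self e x y).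
by move/eqP; rewrite (negbTE (legs_x a_legs)).
Qed.

Lemma vertex_cases v : [\/ v = x, v = y | exists2 a, a \in legs & v \in leg a].
Proof.
case: (eqVneq v y) => [-> | vy]; first exact: Or32.
have [a eya v_a] := Tcomp_cover tree vy.
case: (eqVneq a x) => [ax | a_x].
  by subst a; apply: Or31; apply: Tcomp_leaf v_a; apply: x_nbr.
by apply: Or33; exists a; rewrite // inE eya.
Qed.

Definition legof (v : T) : T := odflt v [pick a in legs | v \in leg a].

Lemma legofE a v : a \in legs -> v \in leg a -> legof v = a.
Proof.
move=> a_legs v_a; apply: pick_eq => [|a' /andP[a'_legs v_a']]; first by rewrite a_legs.
exact: Tcomp_disjoint (legs_y a'_legs) (legs_y a_legs) v_a' v_a.
Qed.

(* Position of a vertex along its path x - y - a - second a - third a: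
   0 for x, 1 for y, 2 for leg roots, 3 for second and 4 for third vertices. *)
Definition pos (v : T) : nat :=
  if v == x then 0 else if v == y then 1 else
  if v == legof v then 2 else if v == second (legof v) then 3 else 4.

Lemma legof_root a : a \in legs -> legof a = a.
Proof. by move=> a_legs; apply: legofE a_legs (Tcomp_self e a y). Qed.
Lemma legof_second a : a \in legs -> legof (second a) = a.
Proof. by move=> a_legs; apply: legofE a_legs (second_in a_legs). Qed.
Lemma legof_third a : a \in legs -> long a -> legof (third a) = a.
Proof. by move=> a_legs long_a; apply: legofE a_legs (third_in a_legs long_a). Qed.

Lemma pos_x : pos x = 0. Proof. by rewrite /pos eqxx. Qed.
Lemma pos_y : pos y = 1. Proof. by rewrite /pos eq_sym (negbTE x_neq_y) eqxx. Qed.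
Lemma pos_root a : a \in legs -> pos a = 2.
Proof.
move=> a_legs; have a_leg := Tcomp_self e a y.
rewrite /pos (negbTE (leg_neq_x a_legs a_leg)) (negbTE (leg_neq_y a_legs a_leg)).
by rewrite legof_root // eqxx.
Qed.
Lemma pos_second a : a \in legs -> pos (second a) = 3.
Proof.
move=> a_legs; have b_leg := second_in a_legs.
rewrite /pos (negbTE (leg_neq_x a_legs b_leg)) (negbTE (leg_neq_y a_legs b_leg)).
by rewrite legof_second // (negbTE (second_neq a_legs)) eqxx.
Qed.
Lemma pos_third a : a \in legs -> long a -> pos (third a) = 4.
Proof.
move=> a_legs long_a; have c_leg := third_in a_legs long_a.
rewrite /pos (negbTE (leg_neq_x a_legs c_leg)) (negbTE (leg_neq_y a_legs c_leg)).
by rewrite legof_third //; case/andP: (third_neq a_legs long_a) => /negbTE -> /negbTE ->.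
Qed.

Inductive vertex_spec : T -> Prop :=
| VertexX : vertex_spec x
| VertexY : vertex_spec y
| VertexRoot a of a \in legs : vertex_spec a
| VertexSecond a of a \in legs : vertex_spec (second a)
| VertexThird a of a \in legs & long a : vertex_spec (third a).

Lemma vertexP v : vertex_spec v.
Proof.
case: (vertex_cases v) => [-> | -> | [a a_legs v_a]]; [exact: VertexX | exact: VertexY |].
by case: (leg_mem a_legs v_a) => [-> | -> | [long_a ->]]; constructor.
Qed.

Lemma leg_edge a b u w : a \in legs -> b \in legs ->
  u \in leg a -> w \in leg b -> e u w -> a = b.
Proof. by move=> /legs_y eya /legs_y eyb; apply: Tcomp_edge. Qed.

Lemma leg_y_nbr a v : a \in legs -> v \in leg a -> e y v -> v = a.
Proof. by move/legs_y; apply: Tcomp_nbr. Qed.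

Definition spider_adj (u v : T) : bool :=
  match pos u, pos v with
  | 0, 1 | 1, 0 | 1, 2 | 2, 1 => true
  | 2, 3 | 3, 2 | 3, 4 | 4, 3 => legof u == legof v
  | _, _ => false
  end.

Ltac pos_simpl := rewrite ?/spider_adj ?pos_x ?pos_y; repeat match goal with
 | H : is_true (?a \in _), L : is_true (long ?a) |- context [pos (third ?a)] =>
     rewrite (pos_third H L)
 | H : is_true (?a \in _), L : is_true (long ?a) |- context [legof (third ?a)] =>
     rewrite (legof_third H L)
 | H : is_true (?a \in _) |- context [pos (second ?a)] => rewrite (pos_second H)
 | H : is_true (?a \in _) |- context [legof (second ?a)] => rewrite (legof_second H)
 | H : is_true (?a \in _) |- context [pos ?a] => rewrite (pos_root H)
 | H : is_true (?a \in _) |- context [legof ?a] => rewrite (legof_root H)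
 end.

Lemma spider_adjE_center u v : (u == x) || (u == y) -> e u v = spider_adj u v.
Proof.
case/orP=> /eqP ->; case: (vertexP v) => [||b Hb|b Hb|b Hb Lb];
  pos_simpl; rewrite ?x_nbrE ?(e_sym _ x) ?x_nbrE ?e_irr ?eqxx //.
- by rewrite (negbTE x_neq_y).
- exact/negbTE/(leg_neq_y Hb (Tcomp_self e b y)).
- exact/negbTE/(leg_neq_y Hb (second_in Hb)).
- exact/negbTE/(leg_neq_y Hb (third_in Hb Lb)).
- exact: legs_y.
- apply/negbTE/negP => /(leg_y_nbr Hb (second_in Hb))/eqP.
  exact/negP/second_neq.
- apply/negbTE/negP => /(leg_y_nbr Hb (third_in Hb Lb))/eqP.
  by case/andP: (third_neq Hb Lb) => /negP.
Qed.

Lemma spider_adjE_leg a u v : a \in legs -> u \in leg a -> e u v = spider_adj u v.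
Proof.
move=> Ha /(leg_mem Ha)[-> | -> | [La ->]]; case: (vertexP v) => [||b Hb|b Hb|b Hb Lb];
  pos_simpl; rewrite ?x_nbrE ?(e_sym _ x) ?x_nbrE ?e_irr ?eqxx //.
- exact/negbTE/(leg_neq_y Ha (Tcomp_self e a y)).
- by rewrite e_sym legs_y.
- apply/negbTE/negP => eab; have ab := leg_edge Ha Hb (Tcomp_self e a y) (Tcomp_self e b y) eab.
  by subst b; rewrite e_irr in eab.
- apply/idP/eqP => [|<-]; last exact: second_edge.
  exact: leg_edge Ha Hb (Tcomp_self e a y) (second_in Hb).
- apply/negbTE/negP => eac; have ab := leg_edge Ha Hb (Tcomp_self e a y) (third_in Hb Lb) eac.
  by subst b; move: (third_chord Ha Lb); rewrite eac.
- exact/negbTE/(leg_neq_y Ha (second_in Ha)).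
- apply/negbTE/negP; rewrite e_sym => /(leg_y_nbr Ha (second_in Ha))/eqP.
  exact/negP/second_neq.
- apply/idP/eqP => [|<-]; last by rewrite e_sym second_edge.
  exact: leg_edge Ha Hb (second_in Ha) (Tcomp_self e b y).
- apply/negbTE/negP => ebb; have ab := leg_edge Ha Hb (second_in Ha) (second_in Hb) ebb.
  by subst b; rewrite e_irr in ebb.
- apply/idP/eqP => [|ab]; last by subst b; apply: third_edge.
  exact: leg_edge Ha Hb (second_in Ha) (third_in Hb Lb).
- exact/negbTE/(leg_neq_y Ha (third_in Ha La)).
- apply/negbTE/negP; rewrite e_sym => /(leg_y_nbr Ha (third_in Ha La))/eqP.
  by case/andP: (third_neq Ha La) => /negP.
- apply/negbTE/negP => eca; have ab := leg_edge Ha Hb (third_in Ha La) (Tcomp_self e b y) eca.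
  by subst b; move: (third_chord Ha La); rewrite e_sym eca.
- apply/idP/eqP => [|<-]; last by rewrite e_sym third_edge.
  exact: leg_edge Ha Hb (third_in Ha La) (second_in Hb).
- apply/negbTE/negP => ecc; have ab := leg_edge Ha Hb (third_in Ha La) (third_in Hb Lb) ecc.
  by subst b; rewrite e_irr in ecc.
Qed.

Lemma spider_adjE u v : e u v = spider_adj u v.
Proof.
case: (vertex_cases u) => [-> | -> | [a Ha u_a]]; last exact: spider_adjE_leg Ha u_a.
  by apply: spider_adjE_center; rewrite eqxx.
by apply: spider_adjE_center; rewrite eqxx orbT.
Qed.

Lemma card_legs : 2 <= #|legs|.
Proof.
move: deg_y; rewrite /deg (cardsD1 x) inE e_sym exy add1n ltnS.
by congr (_ <= _); apply: eq_card => w; rewrite !inE andbC.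
Qed.

Definition succ (a : T) : T := next (enum legs) a.
Definition first_leg : T := odflt y [pick a in legs].

Lemma succ_legs a : a \in legs -> succ a \in legs.
Proof. by move=> a_legs; rewrite -mem_enum /succ mem_next mem_enum. Qed.

Lemma prev_succ a : prev (enum legs) (succ a) = a.
Proof. by rewrite /succ prev_next // enum_uniq. Qed.

Lemma succ_neq a : a \in legs -> succ a != a.
Proof. by move=> a_legs; apply: next_neq; rewrite ?enum_uniq -?cardE ?card_legs ?mem_enum. Qed.

Lemma first_leg_legs : first_leg \in legs.
Proof.
rewrite /first_leg; case: pickP => [a // | none].
by move: card_legs; rewrite (eq_card0 none).
Qed.

Definition spin (v : T) : T :=
  match pos v with
  | 0 => y
  | 1 => second first_leg
  | 2 => if succ v == first_leg then x else second (succ v)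
  | 3 => if long (legof v) then third (legof v) else legof v
  | _ => legof v
  end.

Definition unspin (w : T) : T :=
  match pos w with
  | 0 => prev (enum legs) first_leg
  | 1 => x
  | 2 => if long w then third w else second w
  | 3 => if legof w == first_leg then y else prev (enum legs) (legof w)
  | _ => second (legof w)
  end.

Lemma spin_x : spin x = y. Proof. by rewrite /spin pos_x. Qed.
Lemma spin_y : spin y = second first_leg. Proof. by rewrite /spin pos_y. Qed.
Lemma spin_root a : a \in legs ->
  spin a = if succ a == first_leg then x else second (succ a).
Proof. by move=> a_legs; rewrite /spin pos_root. Qed.
Lemma spin_second a : a \in legs -> spin (second a) = if long a then third a else a.
Proof. by move=> a_legs; rewrite /spin pos_second // legof_second. Qed.
Lemma spin_third a : a \in legs -> long a -> spin (third a) = a.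
Proof. by move=> a_legs long_a; rewrite /spin pos_third // legof_third. Qed.

Lemma spinK : cancel spin unspin.
Proof.
have a0_legs := first_leg_legs.
move=> v; case: (vertexP v) => [|| a Ha | a Ha | a Ha La].
- by rewrite spin_x /unspin pos_y.
- by rewrite spin_y /unspin; pos_simpl; rewrite eqxx.
- have Hs := succ_legs Ha; rewrite spin_root //; case: eqP => [succ_a | succ_a].
    by rewrite /unspin pos_x -succ_a prev_succ.
  by rewrite /unspin; pos_simpl; case: eqP => // _; rewrite prev_succ.
- by rewrite spin_second //; case: ifP => long_a; rewrite /unspin; pos_simpl; rewrite ?long_a.
- by rewrite spin_third // /unspin; pos_simpl; rewrite La.
Qed.

(* Two legs of length >= 2 plus x and y: the spider has at least six vertices. *)
Lemma card_gt5 : 5 < #|T|.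
Proof.
have a0_legs := first_leg_legs; have a1_legs := succ_legs a0_legs.
set s := [:: x; y; first_leg; second first_leg; succ first_leg; second (succ first_leg)].
have uniq_s : uniq s.
  apply: (@map_uniq _ _ (fun v => (pos v, legof v))); rewrite /s /=; pos_simpl.
  by rewrite !inE !xpair_eqE /= eq_sym (negbTE (succ_neq a0_legs)).
by have := max_card (mem s); rewrite (card_uniqP uniq_s).
Qed.

Lemma dist_le_walk u v p :
  path e u p -> last u p = v -> size p <= 5 -> dist e u v <= size p.
Proof. by move=> up lastp small; apply: dist_le_path up lastp (leq_ltn_trans small card_gt5). Qed.

Ltac spider_edge := first
 [ exact: exy | by rewrite e_sym exy
 | match goal with H : is_true (?a \in _) |- is_true (e y ?a) => exact: legs_y H end
 | match goal with H : is_true (?a \in _) |- is_true (e ?a y) => by rewrite e_sym legs_y end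
 | match goal with H : is_true (?a \in _) |- is_true (e ?a (second ?a)) => exact: second_edge H end
 | match goal with H : is_true (?a \in _) |- is_true (e (second ?a) ?a) =>
     by rewrite e_sym second_edge end
 | match goal with H : is_true (?a \in _), L : is_true (long ?a)
     |- is_true (e (second ?a) (third ?a)) => exact: third_edge H L end
 | match goal with H : is_true (?a \in _), L : is_true (long ?a)
     |- is_true (e (third ?a) (second ?a)) => by rewrite e_sym third_edge end ].

Ltac walk p := apply: leq_trans (dist_le_walk (p := p) _ _ _) _;
  [rewrite /= ?andbT; repeat (apply/andP; split); spider_edge | done | done | done].

Lemma spin_edge u v : e u v -> ~~ e (spin u) (spin v) && (dist e (spin u) (spin v) <= 5).
Proof.
have a0_legs := first_leg_legs.
rewrite spider_adjE; case: (vertexP u) => [||a Ha|a Ha|a Ha La];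
  case: (vertexP v) => [||b Hb|b Hb|b Hb Lb]; pos_simpl; try done; rewrite ?spin_x ?spin_y.
- by move=> _; rewrite spider_adjE; pos_simpl; walk [:: first_leg; second first_leg].
- by move=> _; rewrite spider_adjE; pos_simpl; walk [:: first_leg; y].
- move=> _; have Hs := succ_legs Hb; rewrite (spin_root Hb).
  case: ifP => _; rewrite spider_adjE; pos_simpl; rewrite /=.
  + by walk [:: first_leg; y; x].
  + by walk [:: first_leg; y; succ b; second (succ b)].
- move=> _; have Hs := succ_legs Ha; rewrite (spin_root Ha).
  case: ifP => _; rewrite spider_adjE; pos_simpl; rewrite /=.
  + by walk [:: y; first_leg; second first_leg].
  + by walk [:: succ a; y; first_leg; second first_leg].
- move/eqP => ab; subst b; have Hs := succ_legs Ha; have Hn := negbTE (succ_neq Ha).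
  rewrite (spin_root Ha) (spin_second Ha); case: (boolP (long a)) => L; case: ifP => _;
    rewrite spider_adjE; pos_simpl; rewrite /= ?Hn.
  + by walk [:: y; a; second a; third a].
  + by walk [:: succ a; y; a; second a; third a].
  + by walk [:: y; a].
  + by walk [:: succ a; y; a].
- move/eqP => ab; subst b; have Hs := succ_legs Ha; have Hn := negbTE (succ_neq Ha).
  rewrite (spin_root Ha) (spin_second Ha); case: (boolP (long a)) => L; case: ifP => _;
    rewrite spider_adjE; pos_simpl; rewrite /= ?(eq_sym a (succ a)) ?Hn.
  + by walk [:: second a; a; y; x].
  + by walk [:: second a; a; y; succ a; second (succ a)].
  + by walk [:: y; x].
  + by walk [:: y; succ a; second (succ a)].
- move/eqP => ab; subst b; rewrite (spin_second Ha) (spin_third Ha Lb) Lb spider_adjE.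
  by pos_simpl; rewrite /=; walk [:: second a; a].
- move/eqP => ab; subst b; rewrite (spin_second Ha) (spin_third Ha La) La spider_adjE.
  by pos_simpl; rewrite /=; walk [:: second a; third a].
Qed.

Lemma spin_pos v : pos (spin v) != pos v.
Proof.
have a0_legs := first_leg_legs.
case: (vertexP v) => [|| a Ha | a Ha | a Ha La]; rewrite ?spin_x ?spin_y; pos_simpl => //.
- by have Hs := succ_legs Ha; rewrite (spin_root Ha); case: ifP; pos_simpl.
- by rewrite (spin_second Ha); case: (boolP (long a)) => L; pos_simpl.
- by rewrite (spin_third Ha La); pos_simpl.
Qed.

Lemma spin_displacement v : dist e v (spin v) <= 4.
Proof.
have a0_legs := first_leg_legs.
case: (vertexP v) => [|| a Ha | a Ha | a Ha La]; rewrite ?spin_x ?spin_y.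
- by walk [:: y].
- by walk [:: first_leg; second first_leg].
- have Hs := succ_legs Ha; rewrite (spin_root Ha); case: ifP => _.
  + by walk [:: y; x].
  + by walk [:: y; succ a; second (succ a)].
- by rewrite (spin_second Ha); case: (boolP (long a)) => L; [walk [:: third a] | walk [:: a]].
- by rewrite (spin_third Ha La); walk [:: second a; a].
Qed.

Lemma spider_good_placement : exists sigma : {perm T}, good_2placement e x sigma.
Proof.
have a0_legs := first_leg_legs.
exists (perm (can_inj spinK)); split.
  by move=> v; rewrite permE; apply: contraNneq (spin_pos v) => ->.
split=> [a b /spin_edge | a b /spin_edge | | w /x_nbr -> | w _]; rewrite !permE.
- by case/andP.
- by case/andP.
- rewrite spin_x; apply/eqP; rewrite eqn_leq dist_gt0 ?x_neq_y // andbT.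
  by walk [:: y].
- by rewrite spin_y; walk [:: first_leg; second first_leg].
- exact: spin_displacement.
Qed.

End Spider.

Theorem lemma3p10 (T : finType) (e : rel T) (x y : T) :
  is_tree e -> ~ is_star e ->
  e x y -> deg e x = 1 -> 3 <= deg e y ->
  (forall y' : T, e y y' -> y' != x ->
     neighbor_F_tree e y' y /\ #|Tcomp e y' y| != 1) ->
  exists sigma : {perm T}, good_2placement e x sigma.
Proof.
move=> tree _ exy deg_x deg_y short_legs.
exact: spider_good_placement tree exy deg_x deg_y short_legs.
Qed.
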